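(* Let $\omega$ and $\omega'$ be two nonsingular Sturmian words (not necessarily of the same slope, i.e. not necessarily with the same set of factors). Then for every nonempty prefix $u$ of $\omega$ and every nonempty prefix $u'$ of $\omega'$, the set $\omega|_u\cap\omega'|_{u'}$ is an IP$^*$-set (respectively, a central$^*$ set); in particular it is infinite.
   Context: A Sturmian word is an infinite word over $\{0,1\}$ having exactly $k+1$ distinct factors of length $k$ for every $k\ge0$. With $T$ the shift and $\Omega$ the shift-orbit closure of a Sturmian word $\omega$, the characteristic word $\tilde\omega$ is the unique element of $\Omega$ all of whose prefixes $v$ are left special ($0v$, $1v$ both factors of $\omega$); $\omega$ is nonsingular if $T^n(\omega)\ne\tilde\omega$ for all $n\ge1$. $\omega|_u=\{n\in\mathbb N:\omega_n\cdots\omega_{n+|u|-1}=u\}$. A set $A\subseteq\mathbb N$ is an IP-set if there is $x_0<x_1<\cdots$ in $\mathbb N$ with $\sum_{n\in F}x_n\in A$ for all nonempty finite $F$; IP$^*$ if it meets every IP-set. $\beta\mathbb N$ is the set of ultrafilters on $\mathbb N$ with addition $A\in p+q$ iff $\{n:A-n\in p\}\in q$; a minimal idempotent is a non-principal $p=p+p$ in the smallest two-sided ideal of $\beta\mathbb N$; central sets are members of some minimal idempotent, and central$^*$ sets are sets belonging to every minimal idempotent. *)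

From mathcomp Require Import all_boot.
Set Implicit Arguments. Unset Strict Implicit. Unset Printing Implicit Defensive.

(* Infinite words over {0,1}: bool, with false = 0, true = 1. *)
Definition word := nat -> bool.

Definition factor (w : word) (n k : nat) : seq bool := mkseq (fun i => w (n + i)) k.

Definition isFactor (w : word) (v : seq bool) : Prop :=
  exists n, factor w n (size v) = v.

Definition sturmian (w : word) : Prop :=
  forall k, exists s : seq (seq bool),
    uniq s /\ size s = k.+1 /\
    (forall v, v \in s <-> exists n, v = factor w n k).

(* shift-orbit closure (product topology): every prefix of x is a factor of w *)
Definition inOrbitClosure (w x : word) : Prop :=
  forall k, isFactor w (factor x 0 k).

Definition leftSpecial (w : word) (v : seq bool) : Prop :=
  isFactor w (false :: v) /\ isFactor w (true :: v).

Definition characteristic (w c : word) : Prop :=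
  inOrbitClosure w c /\ forall k, leftSpecial w (factor c 0 k).

Definition nonsingular (w : word) : Prop :=
  forall c, characteristic w c -> forall n, 1 <= n -> exists m, w (n + m) <> c m.

Definition occ (w : word) (u : seq bool) : nat -> Prop :=
  fun n => factor w n (size u) = u.

Definition IPset (A : nat -> Prop) : Prop :=
  exists x : nat -> nat, (forall i, x i < x i.+1) /\
    forall F : seq nat, F != [::] -> uniq F -> A (\sum_(i <- F) x i).

Definition IPstar (A : nat -> Prop) : Prop :=
  forall B, IPset B -> exists n, A n /\ B n.

Definition ufilter := (nat -> Prop) -> Prop.

Definition ultrafilter (p : ufilter) : Prop :=
  p (fun _ => True) /\ ~ p (fun _ => False) /\
  (forall A B : nat -> Prop, (forall n, A n -> B n) -> p A -> p B) /\
  (forall A B, p A -> p B -> p (fun n => A n /\ B n)) /\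
  (forall A, p A \/ p (fun n => ~ A n)).

Definition nonprincipal (p : ufilter) : Prop := forall n, ~ p (fun m => m = n).

Definition uadd (p q : ufilter) : ufilter :=
  fun A => q (fun n => p (fun m => A (m + n))).

Definition ideal (I : ufilter -> Prop) : Prop :=
  (forall p, I p -> ultrafilter p) /\ (exists p, I p) /\
  (forall p q, I p -> ultrafilter q -> I (uadd p q) /\ I (uadd q p)).

(* membership in the smallest two-sided ideal K(beta N) = intersection of all ideals *)
Definition inK (p : ufilter) : Prop :=
  ultrafilter p /\ forall I, ideal I -> I p.

Definition minimal_idempotent (p : ufilter) : Prop :=
  ultrafilter p /\ nonprincipal p /\ (forall A, uadd p p A <-> p A) /\ inK p.

Definition central_star (A : nat -> Prop) : Prop :=
  forall p, minimal_idempotent p -> p A.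

Definition infinite_set (A : nat -> Prop) : Prop :=
  forall N, exists n, N <= n /\ A n.

From mathcomp Require Import all_boot zify.
From Stdlib Require Import Classical ClassicalEpsilon Reals Lra ZArith.
Set Implicit Arguments. Unset Strict Implicit. Unset Printing Implicit Defensive.

(* 1. Combinatorics of Sturmian words: they are not eventually periodic
      (a periodic word has too few factors), every factor recurs (Morse–
      Hedlund), right special factors are unique, and, by Rauzy's argument,
      windows of equal length differ in weight by at most one (balance).
   2. A balanced aperiodic word x is a rotation word: it has an irrational
      slope al, and the intercept phi n = n al - #1's in x[0,n) ranges over an
      interval (s, s+1) in which its orbit is dense modulo 1; x n is 1 exactly
      when phi n lies above s + 1 - al.  Nonsingularity means that phi never
      reaches the ends of the interval.
   3. Return property: for each k there is L such that if a < b carry the same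
      window of length L, then the prefix of length k occurs at b - a.
   4. Given an IP-set generated by x_0 < x_1 < ..., two partial sums carry the
      same pair of windows in w and w'; their difference is a finite sum of
      generators at which both prefixes occur.  Galvin–Glazer (members of
      idempotent ultrafilters are IP-sets) turns IP* into central*. *)

Lemma size_factor w n k : size (factor w n k) = k.
Proof. by rewrite /factor size_mkseq. Qed.

Lemma nth_factor w n k i : i < k -> nth false (factor w n k) i = w (n + i).
Proof. by move=> h; rewrite /factor nth_mkseq. Qed.

Lemma factorP w w' n n' k :
  factor w n k = factor w' n' k <-> (forall i, i < k -> w (n + i) = w' (n' + i)).
Proof.
split.
- by move=> E i hi; rewrite -!(nth_factor _ _ hi) E.
- move=> H; apply: (@eq_from_nth _ false); first by rewrite !size_factor.
  by move=> i; rewrite size_factor => hi; rewrite !nth_factor // H.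
Qed.

Lemma factor_rcons w n k : factor w n k.+1 = rcons (factor w n k) (w (n + k)).
Proof. by rewrite /factor mkseqS. Qed.

Lemma factor_cons w n k : factor w n k.+1 = w n :: factor w n.+1 k.
Proof.
apply: (@eq_from_nth _ false); first by rewrite size_factor [size (_ :: _)]/= size_factor.
move=> i; rewrite size_factor => hi; rewrite nth_factor //.
case: i hi => [|i] hi /=; first by rewrite addn0.
by rewrite nth_factor // addSnnS.
Qed.

Lemma factor_take w a L L' : L <= L' -> factor w a L = take L (factor w a L').
Proof.
move=> h; apply: (@eq_from_nth _ false).
  by rewrite size_take !size_factor; case: ltnP => //; lia.
move=> i; rewrite size_factor => hi; rewrite nth_take // !nth_factor //; lia.
Qed.

Lemma factor_shift w N n L : factor (fun i => w (N + i)) n L = factor w (N + n) L.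
Proof. by apply/factorP => i _; rewrite addnA. Qed.

Lemma pigeonhole N (f : nat -> nat) :
  (forall i, i <= N -> f i < N) -> exists i j, i < j <= N /\ f i = f j.
Proof.
move=> hf.
pose g (i : 'I_N.+1) : 'I_N := Ordinal (hf i (ltnSE (ltn_ord i))).
have /injectivePn [i [j nij /(congr1 val) /= e]] : ~~ injectiveb g.
  by apply/negP => /injectiveP /leq_card; rewrite !card_ord ltnn.
case: (ltngtP i j) => c.
- by exists i, j; rewrite c -ltnS ltn_ord.
- by exists j, i; rewrite c -ltnS ltn_ord.
- by case/eqP: nij; apply: val_inj.
Qed.

Lemma sturmian_factors w k : sturmian w -> exists s : seq (seq bool),
  uniq s /\ size s = k.+1 /\ (forall n, factor w n k \in s) /\
  (forall v, v \in s -> exists n, v = factor w n k).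
Proof.
move=> /(_ k) [s [us [ss hs]]]; exists s; split=> //; split=> //; split.
- by move=> n; apply/hs; exists n.
- by move=> v /hs.
Qed.

Lemma isFactor_mem w k (s : seq (seq bool)) v :
  (forall n, factor w n k \in s) -> size v = k -> isFactor w v -> v \in s.
Proof. by move=> hs hv [n hn]; rewrite -hn hv. Qed.

Lemma isFactor_rcons w u b : isFactor w (rcons u b) -> isFactor w u.
Proof.
move=> [n]; rewrite size_rcons factor_rcons => /rcons_inj [hu _].
by exists n.
Qed.

Definition eventually_periodic (y : word) : Prop :=
  exists M P, 0 < P /\ forall i, M <= i -> y (i + P) = y i.

(* An eventually periodic word has at most M+P factors of length M+P, while a
   Sturmian word has M+P+1 of them. *)
Lemma sturmian_aperiodic w : sturmian w -> ~ eventually_periodic w.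
Proof.
move=> sw [M [P [hP hper]]].
have per : forall q r, w (M + r + q * P) = w (M + r).
  elim=> [|q IH] r; first by rewrite mul0n addn0.
  have -> : M + r + q.+1 * P = (M + r + q * P) + P by rewrite mulSn; lia.
  by rewrite hper ?IH //; lia.
pose rep n := if n < M then n else M + (n - M) %% P.
have hrep : forall n t, w (n + t) = w (rep n + t).
  move=> n t; rewrite /rep; case: (ltnP n M) => // hn.
  have := divn_eq (n - M) P => e.
  rewrite -addnA -(per ((n - M) %/ P) ((n - M) %% P + t)); congr w; lia.
have hrepb : forall n, rep n < M + P.
  move=> n; rewrite /rep; case: (ltnP n M) => hn; first lia.
  have := ltn_pmod (n - M) hP; lia.
have [s [us [ss [_ hs]]]] := sturmian_factors (M + P) sw.
have : size s <= size (map (fun i => factor w i (M + P)) (iota 0 (M + P))).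
  apply: uniq_leq_size => // v /hs [n ->].
  apply/mapP; exists (rep n); first by rewrite mem_iota add0n hrepb.
  by apply/factorP => i _; rewrite hrep.
by rewrite size_map size_iota ss ltnn.
Qed.

Lemma determined_windows_shift y K i j :
  (forall n n', factor y n K = factor y n' K -> y (n + K) = y (n' + K)) ->
  factor y i K = factor y j K -> forall u, factor y (i + u) K = factor y (j + u) K.
Proof.
move=> D e; elim=> [|u IH]; first by rewrite !addn0.
apply/factorP => v hv.
case: (ltnP v.+1 K) => h.
  move/factorP: IH => /(_ v.+1 h).
  by rewrite !addnS !addSn.
have -> : v = K.-1 by lia.
have := D _ _ IH; have -> : i + u.+1 + K.-1 = i + u + K by lia.
by have -> : j + u.+1 + K.-1 = j + u + K by lia.
Qed.

Lemma determined_eventually_periodic y K (t : seq (seq bool)) :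
  (forall n, factor y n K \in t) ->
  (forall n n', factor y n K = factor y n' K -> y (n + K) = y (n' + K)) ->
  eventually_periodic y.
Proof.
move=> ht D.
have hb : forall i, i <= size t -> index (factor y i K) t < size t.
  by move=> i _; rewrite index_mem ht.
have [i [j [hij e]]] := pigeonhole hb.
have eij : factor y i K = factor y j K.
  by rewrite -(nth_index [::] (ht i)) -(nth_index [::] (ht j)) e.
exists (i + K), (j - i); split; first lia.
move=> m hm.
have := D _ _ (determined_windows_shift D eij (m - i - K)).
have -> : i + (m - i - K) + K = m by lia.
by have -> : j + (m - i - K) + K = m + (j - i) by lia.
Qed.

(* Morse–Hedlund: at most K factors of length K force eventual periodicity.
   If some window of length K has two extensions, drop one of them and
   recurse on K; otherwise windows determine letters. *)
Lemma morse_hedlund y K (s : seq (seq bool)) :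
  size s <= K -> (forall n, factor y n K \in s) -> eventually_periodic y.
Proof.
elim: K s => [|K IH] s hs hf.
  by case: s hs hf => [|a l] // _ /(_ 0).
have [[n [n' [e ne]]]|nD] :=
  classic (exists n n', factor y n K = factor y n' K /\ y (n + K) <> y (n' + K)).
  set u2 := factor y n' K.+1.
  apply: (IH (map (take K) (filter (predC1 u2) s))).
    rewrite size_map size_filter.
    have h1 := count_predC (predC1 u2) s.
    have h2 : 0 < count (predC (predC1 u2)) s.
      by rewrite -has_count; apply/hasP; exists u2; [exact: hf | rewrite /= eqxx].
    move: hs; rewrite -h1; move: h2.
    move: (count (predC (predC1 u2)) s) (count (predC1 u2) s) => a b; lia.
  move=> m; apply/mapP.
  case: (eqVneq (factor y m K.+1) u2) => hm.
    exists (factor y n K.+1).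
      rewrite mem_filter hf andbT /= /u2 !factor_rcons.
      by apply/eqP => /rcons_inj [_ ].
    by rewrite -factor_take // e (factor_take y n' (leqnSn K)) -/u2 -hm -factor_take.
  by exists (factor y m K.+1); [rewrite mem_filter /= hm hf | rewrite -factor_take].
apply: (@determined_eventually_periodic y K (map (take K) s)).
  by move=> m; apply/mapP; exists (factor y m K.+1) => //; rewrite -factor_take.
move=> m m' e; case: (y (m + K) =P y (m' + K)) => // ne; exfalso; apply: nD.
by exists m, m'.
Qed.

(* Every factor of a Sturmian word occurs beyond any position: otherwise the
   tail after N would have at most L factors of length L. *)
Lemma sturmian_recurrent w : sturmian w ->
  forall n0 L N, exists n, N <= n /\ factor w n L = factor w n0 L.
Proof.
move=> sw n0 L N; apply: NNPP => hne.
set u := factor w n0 L.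
have [sx [ux [sz [hx _]]]] := sturmian_factors L sw.
have [M [P [hP hper]]] : eventually_periodic (fun i => w (N + i)).
  apply: (morse_hedlund (K := L) (s := filter (predC1 u) sx)).
    rewrite size_filter.
    have h1 := count_predC (predC1 u) sx.
    have h2 : 0 < count (predC (predC1 u)) sx.
      by rewrite -has_count; apply/hasP; exists u; [exact: hx | rewrite /= eqxx].
    move: h1 h2; rewrite sz; move: (count (predC (predC1 u)) sx) (count (predC1 u) sx).
    move=> a b; lia.
  move=> n; rewrite factor_shift mem_filter hx andbT /=.
  by apply/eqP => e; apply: hne; exists (N + n); split => //; exact: leq_addr.
apply: (sturmian_aperiodic sw); exists (N + M), P; split => // i hi.
have := hper (i - N) ltac:(lia) => /=.
by rewrite addnA -[N + (i - N)]/(N + (i - N)) subnKC //; lia.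
Qed.

Definition rightSpecial (w : word) (u : seq bool) : Prop :=
  isFactor w (rcons u false) /\ isFactor w (rcons u true).

Lemma rightSpecial_of w u n n' : factor w n (size u) = u -> factor w n' (size u) = u ->
  w (n + size u) <> w (n' + size u) -> rightSpecial w u.
Proof.
move=> h1 h2 ne.
have f1 : isFactor w (rcons u (w (n + size u))).
  by exists n; rewrite size_rcons factor_rcons h1.
have f2 : isFactor w (rcons u (w (n' + size u))).
  by exists n'; rewrite size_rcons factor_rcons h2.
by move: f1 f2 ne; case: (w (n + size u)); case: (w (n' + size u)) => // f1 f2 _.
Qed.

(* A Sturmian word has exactly one right special factor of each length: two
   of them would yield k+3 factors of length k+1. *)
Lemma rightSpecial_unique w : sturmian w ->
  forall u1 u2, size u1 = size u2 -> rightSpecial w u1 -> rightSpecial w u2 -> u1 = u2.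
Proof.
move=> sw u1 u2 hsz [h1a h1b] [h2a h2b]; apply: NNPP => ne.
set k := size u1.
have [sk [uk [szk [hk hk']]]] := sturmian_factors k sw.
have [sk1 [uk1 [szk1 [hk1 _]]]] := sturmian_factors k.+1 sw.
pose ext u := if excluded_middle_informative (isFactor w (rcons u true)) then true else false.
have hext : forall u, u \in sk -> isFactor w (rcons u (ext u)) /\ size u = k.
  move=> u /hk' [n ->]; rewrite size_factor; split => //.
  rewrite /ext; case: excluded_middle_informative => // hn.
  case e: (w (n + k)).
    by exfalso; apply: hn; exists n; rewrite size_rcons size_factor factor_rcons e.
  by exists n; rewrite size_rcons size_factor factor_rcons e.
have m1 : u1 \in sk by apply: (isFactor_mem hk) => //; exact: isFactor_rcons h1a.
have m2 : u2 \in sk by apply: (isFactor_mem hk); [rewrite -hsz | exact: isFactor_rcons h2a].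
pose L := map (fun u => rcons u (ext u)) sk ++ [:: rcons u1 (~~ ext u1); rcons u2 (~~ ext u2)].
have : size L <= size sk1.
  apply: uniq_leq_size.
    rewrite cat_uniq; apply/and3P; split.
    - by rewrite map_inj_uniq // => a b /rcons_inj [].
    - apply/hasPn => v; rewrite !inE => /orP [] /eqP -> ;
        apply/mapP => [[u hu /rcons_inj [e1 e2]]]; move: e2; rewrite -e1; by case: (ext _).
    - by rewrite /= inE andbT; apply/eqP => /rcons_inj [e _]; exact: ne.
  move=> v; rewrite mem_cat => /orP [/mapP [u hu ->]|].
    have [hf hs] := hext u hu; apply: (isFactor_mem hk1) => //; by rewrite size_rcons hs.
  rewrite !inE => /orP [] /eqP ->.
    by apply: (isFactor_mem hk1); [rewrite size_rcons | case: (ext u1)].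
  by apply: (isFactor_mem hk1); [rewrite size_rcons -hsz | case: (ext u2)].
by rewrite size_cat size_map szk szk1 /= addn2 ltnn.
Qed.

Definition wsum (w : word) (i n : nat) : nat := \sum_(t < n) (w (i + t) : nat).

Lemma wsum0 w i : wsum w i 0 = 0.
Proof. by rewrite /wsum big_ord0. Qed.

Lemma wsumS w i n : wsum w i n.+1 = wsum w i n + w (i + n).
Proof. by rewrite /wsum big_ord_recr. Qed.

Lemma wsumS' w i n : wsum w i n.+1 = w i + wsum w i.+1 n.
Proof.
rewrite /wsum big_ord_recl addn0; congr (_ + _).
by apply: eq_bigr => t _; rewrite -addSnnS.
Qed.

Lemma wsum_add w i a b : wsum w i (a + b) = wsum w i a + wsum w (i + a) b.
Proof.
elim: b => [|b IH]; first by rewrite addn0 wsum0 addn0.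
by rewrite addnS !wsumS IH addnA addnA.
Qed.

Lemma wsum_factor w w' i j n : factor w i n = factor w' j n -> wsum w i n = wsum w' j n.
Proof. by move/factorP => h; apply: eq_bigr => t _; rewrite h. Qed.

Lemma wsum_le w i n : wsum w i n <= n.
Proof.
elim: n => [|n IH]; first by rewrite wsum0.
by rewrite wsumS; case: (w (i + n)) => /=; lia.
Qed.

Lemma wsum_shift1 w i P : w (i + P) = w i -> wsum w i.+1 P = wsum w i P.
Proof. by move=> e; have := wsumS w i P; rewrite wsumS' e; lia. Qed.

Definition balanced_below (w : word) (N : nat) : Prop :=
  forall n i j, n < N -> wsum w i n <= wsum w j n + 1.

(* Rauzy's argument.  Let z (of length m) be right special, and suppose that
   for the letter a the word (~~a) z is not right special while both a z a and
   (~~a) z (~~a) occur.  Then the windows of length m+1 behave like a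
   deterministic system except at a z; following it from an occurrence of
   a z to its first return shows that the return time is at most m+2 and
   that (~~a) z occurs in between, which produces two windows of length m+2
   (a z a and (~~a) z (~~a)) violating balance at length < m+2. *)
Section Rauzy.
Variables (w : word) (a : bool) (m : nat) (z : seq bool) (j p : nat).
Hypothesis sw : sturmian w.
Hypothesis hz : size z = m.
Hypothesis bal : balanced_below w m.+2.
Hypothesis RSz : rightSpecial w z.
Hypothesis nrs : ~ rightSpecial w (~~ a :: z).
Hypothesis hj : factor w j m.+1 = a :: z.
Hypothesis hj' : w (j + m.+1) = a.
Hypothesis hp : factor w p m.+1 = ~~ a :: z.
Hypothesis hp' : w (p + m.+1) = ~~ a.

Local Notation W n := (factor w n m.+1).

Lemma neq_aa : (~~ a :: z) <> (a :: z).
Proof. by case; case: a. Qed.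

(* Since (~~a) z is not right special, it is always followed by ~~a. *)
Lemma opposite_extension n : W n = ~~ a :: z -> w (n + m.+1) = ~~ a.
Proof.
move=> hn; apply: NNPP => ne; apply: nrs.
apply: (rightSpecial_of (n := n) (n' := p)); rewrite /= ?hz //.
by rewrite hp'; move: ne; case: (w _) (~~ a).
Qed.

(* Every window of length m+1 other than a z determines the next letter: a
   right special window would end with the unique right special factor z and,
   not being a z, it would be (~~a) z. *)
Lemma windows_determined n n' :
  W n = W n' -> W n <> a :: z -> w (n + m.+1) = w (n' + m.+1).
Proof.
move=> e ne; apply: NNPP => ne2.
have F0 : factor w n.+1 m = factor w n'.+1 m by move: e; rewrite !factor_cons => [[]].
have R0 : rightSpecial w (factor w n.+1 m).
  apply: (rightSpecial_of (n := n.+1) (n' := n'.+1)); rewrite size_factor // -?F0 //.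
  by rewrite !addSnnS.
have E0 : factor w n.+1 m = z by apply: (rightSpecial_unique sw) => //; rewrite size_factor hz.
have RSn : rightSpecial w (factor w n m.+1).
  by apply: (rightSpecial_of (n := n) (n' := n')); rewrite size_factor // -?e.
have wn : w n = ~~ a.
  move: ne; rewrite factor_cons E0 => ne.
  by case: (w n) (a) ne => [] [] // ne; exfalso; apply: ne.
by apply: nrs; move: RSn; rewrite factor_cons E0 wn.
Qed.

Lemma window_step n n' : W n = W n' -> w (n + m.+1) = w (n' + m.+1) -> W n.+1 = W n'.+1.
Proof.
move/factorP => e e'; apply/factorP => i hi.
case: (ltnP i.+1 m.+1) => h.
  by have := e _ h; rewrite !addnS !addSn.
have -> : i = m by lia.
by rewrite !addSnnS.
Qed.

Lemma follow n n' k : W n = W n' -> (forall k', k' < k -> W (n + k') <> a :: z) ->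
  W (n + k) = W (n' + k).
Proof.
move=> e; elim: k => [|k IH] H; first by rewrite !addn0.
have e1 := IH (fun k' hk => H k' (ltnW hk)).
rewrite !addnS; apply: window_step => //; apply: windows_determined => //; exact: H.
Qed.

(* If the last a z before an occurrence of (~~a) z is followed by ~~a, then
   from there on the orbit copies the one after (~~a) z and never meets a z
   again, contradicting recurrence. *)
Lemma last_occurrence_absurd o r : o < r -> W o = a :: z -> W r = ~~ a :: z ->
  (forall i, o < i <= r -> W i <> a :: z) -> w (o + m.+1) = ~~ a -> False.
Proof.
move=> hor Wo Wr hmax ea.
have e1 : W o.+1 = W r.+1.
  apply/factorP => i hi.
  case: (ltnP i m) => h.
    have := nth_factor w o (k := m.+1) (i := i.+1) ltac:(lia).
    have := nth_factor w r (k := m.+1) (i := i.+1) ltac:(lia).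
    by rewrite Wo Wr /= !addSnnS => <- <-.
  have -> : i = m by lia.
  by rewrite !addSnnS ea opposite_extension.
have never : forall k, W (o.+1 + k) <> a :: z.
  elim/ltn_ind => k IH.
  case: (ltnP k (r - o)) => hk; first by apply: hmax; lia.
  set e := k - (r - o).
  have he : e < k by rewrite /e; lia.
  have := follow (k := e) e1 (fun k' hk' => IH k' (ltn_trans hk' he)).
  have -> : r.+1 + e = o.+1 + k by rewrite /e; lia.
  by move=> <-; apply: IH.
have [q [hq Wq]] := sturmian_recurrent sw j m.+1 o.+1.
by apply: (never (q - o.+1)); rewrite subnKC // Wq hj.
Qed.

Section Return.
Variable t1 : nat.
Hypothesis jt1 : j < t1.
Hypothesis Wt1 : W t1 = a :: z.
Hypothesis first_return : forall t, j < t < t1 -> W t <> a :: z.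

Lemma opposite_before_return : exists q, j < q < t1 /\ W q = ~~ a :: z.
Proof.
apply: NNPP => nA.
have nA' : forall q, j < q < t1 -> W q <> ~~ a :: z by move=> q hq e; apply: nA; exists q.
have [r [hr Wr]] := sturmian_recurrent sw p m.+1 t1.+1.
rewrite hp in Wr.
have ex2 : exists i, (i <= r) && (W i == a :: z) by exists t1; rewrite Wt1 eqxx andbT; lia.
have ub2 : forall i, (i <= r) && (W i == a :: z) -> i <= r by move=> i /andP [].
case: (ex_maxnP ex2 ub2) => o /andP [hor /eqP Wo] hmax.
have hor' : o < r.
  by rewrite ltn_neqAle hor andbT; apply/eqP => e; apply: neq_aa; rewrite -Wr -e.
have hmax' : forall i, o < i <= r -> W i <> a :: z.
  move=> i /andP [h1 h2] e; have := hmax i; rewrite h2 e eqxx /= => /(_ isT); lia.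
case ea: (w (o + m.+1) == a); last first.
  by apply: (last_occurrence_absurd hor' Wo Wr hmax'); move/negbT: ea; case: a; case: (w _).
have e1 : W o.+1 = W j.+1 by apply: window_step; [rewrite Wo hj | rewrite (eqP ea) hj'].
case: (ltnP (r - o) (t1 - j)) => hc.
  have H : forall k', k' < r - o - 1 -> W (j.+1 + k') <> a :: z.
    by move=> k' hk; apply: first_return; lia.
  have := follow (k := r - o - 1) (esym e1) H.
  have -> : o.+1 + (r - o - 1) = r by lia.
  rewrite Wr => e2; apply: (nA' (j.+1 + (r - o - 1))); first lia.
  by rewrite e2.
have H : forall k', k' < t1 - j - 1 -> W (j.+1 + k') <> a :: z.
  by move=> k' hk; apply: first_return; lia.
have := follow (k := t1 - j - 1) (esym e1) H.
have -> : j.+1 + (t1 - j - 1) = t1 by lia.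
rewrite Wt1 => e2; apply: (hmax' (o.+1 + (t1 - j - 1))); first lia.
by rewrite -e2.
Qed.

(* The windows at positions j, ..., t1-1 are pairwise distinct, so there are
   at most m+2 of them. *)
Lemma return_time_small : t1 - j <= m.+2.
Proof.
have hdist : forall i i', j <= i -> i < i' -> i' < t1 -> W i <> W i'.
  move=> i i' h1 h2 h3 e.
  case: (eqVneq i j) => [eij|nij].
    by subst i; apply: (first_return (t := i')); [lia | rewrite -e hj].
  have H : forall k', k' < t1 - i' -> W (i + k') <> a :: z.
    by move=> k' hk; apply: first_return; lia.
  have := follow (k := t1 - i') e H; have -> : i' + (t1 - i') = t1 by lia.
  by rewrite Wt1; apply: first_return; lia.
have [sk [uk [szk [hk _]]]] := sturmian_factors m.+1 sw.
have : size (map (fun i => W i) (iota j (t1 - j))) <= size sk.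
  apply: uniq_leq_size; last by move=> v /mapP [i _ ->].
  rewrite map_inj_in_uniq ?iota_uniq // => i i'; rewrite !mem_iota => hi hi' e.
  case: (ltngtP i i') => // c; exfalso.
    by apply: (hdist i i') => //; lia.
  by apply: (hdist i' i) => //; lia.
by rewrite size_map size_iota szk.
Qed.

(* The word is (t1-j)-periodic on [j, q+P), so the windows of length m+2 at j
   and at q (reading a z a and (~~a) z (~~a)) differ in weight by 2 while
   their tails beyond the period differ by at most 1. *)
Lemma return_absurd : False.
Proof.
have [q [hq1 hq2]] := opposite_before_return.
have hP := return_time_small.
set P := t1 - j.
have per : forall u, u < m.+1 -> w (t1 + u) = w (j + u).
  by move=> u hu; have /factorP := etrans Wt1 (esym hj); apply.
have wq : forall e, j + e <= q -> wsum w (j + e) P = wsum w j P.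
  elim=> [|e IH] he; first by rewrite addn0.
  rewrite addnS wsum_shift1 ?IH //; first lia.
  have -> : j + e + P = t1 + e by rewrite /P; lia.
  by apply: per; rewrite /P in hP; lia.
have X : wsum w q P = wsum w j P by have := wq (q - j) ltac:(lia); rewrite subnKC //; lia.
have Sj : wsum w j m.+2 = wsum w j P + wsum w (j + P) (m.+2 - P) by rewrite -wsum_add subnKC.
have Sq : wsum w q m.+2 = wsum w q P + wsum w (q + P) (m.+2 - P) by rewrite -wsum_add subnKC.
have b1 := bal (j + P) (q + P) (n := m.+2 - P) ltac:(rewrite /P; lia).
have b2 := bal (q + P) (j + P) (n := m.+2 - P) ltac:(rewrite /P; lia).
have [wj0 zj] : w j = a /\ factor w j.+1 m = z by move: hj; rewrite factor_cons => [[]].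
have [wq0 zq] : w q = ~~ a /\ factor w q.+1 m = z by move: hq2; rewrite factor_cons => [[]].
have T1 : wsum w j m.+2 = a + wsum w j.+1 m + a by rewrite wsumS wsumS' wj0 hj'.
have T2 : wsum w q m.+2 = ~~ a + wsum w q.+1 m + ~~ a.
  by rewrite wsumS wsumS' wq0 opposite_extension.
have Z : wsum w j.+1 m = wsum w q.+1 m by apply: wsum_factor; rewrite zj zq.
by move: T1 T2 Z Sj Sq X b1 b2; case: a => /=; lia.
Qed.

End Return.

Lemma rauzy_absurd : False.
Proof.
have ex1 : exists t, (j < t) && (W t == a :: z).
  have [t [ht e]] := sturmian_recurrent sw j m.+1 j.+1.
  by exists t; rewrite ht e hj eqxx.
case: (ex_minnP ex1) => t1 /andP [jt1 /eqP Wt1] hmin.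
apply: (@return_absurd t1) => // t /andP [h1 h2] e.
by have := hmin t; rewrite h1 e eqxx /= => /(_ isT); lia.
Qed.

End Rauzy.

Lemma minimal_unbalanced_shape w m i j : balanced_below w m.+2 ->
  wsum w j m.+2 + 1 < wsum w i m.+2 ->
  [/\ factor w i m.+1 = true :: factor w i.+1 m,
      factor w j m.+1 = false :: factor w i.+1 m,
      w (i + m.+1) = true & w (j + m.+1) = false].
Proof.
move=> bal hc.
have [wi wj] : w i = true /\ w j = false.
  have := bal m.+1 i.+1 j.+1 (ltnSn _).
  by move: hc; rewrite !wsumS'; case: (w i); case: (w j) => /=; lia.
have mid : forall k, k <= m -> wsum w i.+1 k = wsum w j.+1 k.
  move=> k hk.
  have p1 := bal k.+1 i j ltac:(lia).
  have p2 := bal (m.+2 - k.+1) (i + k.+1) (j + k.+1) ltac:(lia).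
  have e : m.+2 = k.+1 + (m.+2 - k.+1) by lia.
  move: p1 p2 hc; rewrite {3 4}e !wsum_add !wsumS' wi wj /=.
  move: (wsum w i.+1 k) (wsum w j.+1 k).
  move: (wsum w (i + k.+1) (m.+2 - k.+1)) (wsum w (j + k.+1) (m.+2 - k.+1)); lia.
have ez : factor w i.+1 m = factor w j.+1 m.
  apply/factorP => k hk; have := mid k.+1 hk; rewrite !wsumS mid ?(ltnW hk) //.
  by case: (w (i.+1 + k)); case: (w (j.+1 + k)) => /=; lia.
have [li lj] : w (i + m.+1) = true /\ w (j + m.+1) = false.
  move: hc; rewrite (wsumS w i m.+1) (wsumS w j m.+1) (wsumS' w i m) (wsumS' w j m).
  rewrite wi wj (wsum_factor ez) -!addSnnS.
  by case: (w (i.+1 + m)); case: (w (j.+1 + m)) => /=; lia.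
by split; rewrite // factor_cons ?wi ?wj -?ez.
Qed.

(* Sturmian words are balanced: a shortest unbalanced pair 1z1, 0z0 makes z
   right special, and Rauzy's argument applies to whichever of 1z, 0z is not
   right special. *)
Theorem sturmian_balanced w : sturmian w -> forall n i j, wsum w i n <= wsum w j n + 1.
Proof.
move=> sw; elim/ltn_ind => n IH i j; rewrite leqNgt; apply/negP => hc.
have n2 : 1 < n.
  case: n IH hc => [|[|n]] // IH; first by rewrite !wsum0.
  by rewrite !wsumS !wsum0; case: (w _); case: (w _).
have hn : n = (n - 2).+2 by lia.
move: (n - 2) hn => m hn; rewrite hn in hc IH.
have bal : balanced_below w m.+2 by move=> ? ? ? ?; apply: IH.
have [Fi Fj li lj] := minimal_unbalanced_shape bal hc.
set z := factor w i.+1 m in Fi Fj.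
have hz : size z = m by rewrite size_factor.
have RSz : rightSpecial w z.
  have zj : factor w j.+1 m = z by move: Fj; rewrite factor_cons => [[]].
  apply: (rightSpecial_of (n := j.+1) (n' := i.+1)); rewrite ?hz //.
  by rewrite !addSnnS lj li.
case: (classic (rightSpecial w (true :: z))) => hr.
  apply: (@rauzy_absurd w true m z i j) => // hr'.
  by have := rightSpecial_unique sw (u1 := true :: z) (u2 := false :: z) erefl hr hr'.
exact: (@rauzy_absurd w false m z j i).
Qed.

Lemma INR_addn m n : INR (m + n)%nat = (INR m + INR n)%R.
Proof. exact: plus_INR. Qed.

Lemma INR_muln m n : INR (m * n)%nat = (INR m * INR n)%R.
Proof. exact: mult_INR. Qed.

Lemma INR_leP m n : (m <= n)%nat <-> (INR m <= INR n)%R.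
Proof. by split; [move/leP; exact: le_INR | move/INR_le/leP]. Qed.

Lemma INR_ltP m n : (m < n)%nat <-> (INR m < INR n)%R.
Proof. by split; [move/ltP; exact: lt_INR | move/INR_lt/ltP]. Qed.

Lemma INR_bool (b : bool) : INR b = if b then 1%R else 0%R.
Proof. by case: b. Qed.

Lemma INR_Z_to_nat z : (0 <= z)%Z -> INR (Z.to_nat z) = IZR z.
Proof. by move=> h; rewrite INR_IZR_INZ Z2Nat.id. Qed.

Lemma IZR_gt_m1 z : (-1 < IZR z)%R -> (0 <= z)%Z.
Proof. move=> h; suff : (-1 < z)%Z by lia. exact: lt_IZR. Qed.

Lemma Rabs_le_inv r b : (Rabs r <= b -> -b <= r <= b)%R.
Proof. move=> h; have := Rle_abs r; have := Rle_abs (- r); rewrite Rabs_Ropp; lra. Qed.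

Lemma Int_part_spec r : (IZR (Int_part r) <= r < IZR (Int_part r) + 1)%R.
Proof. by have [] := base_Int_part r; lra. Qed.

Lemma Rdiv_le_of a b c : (0 < c -> a <= b * c -> a / c <= b)%R.
Proof. move=> hc h; apply: (Rmult_le_reg_r c) => //; rewrite /Rdiv Rmult_assoc Rinv_l; lra. Qed.

Lemma Rle_div_of a b c : (0 < c -> a * c <= b -> a <= b / c)%R.
Proof. move=> hc h; apply: (Rmult_le_reg_r c) => //; rewrite /Rdiv Rmult_assoc Rinv_l; lra. Qed.

Lemma Rmul_le_of_div_le a b c : (0 < c -> a / c <= b -> a <= b * c)%R.
Proof.
move=> hc h; have := Rmult_le_compat_r c _ _ (Rlt_le _ _ hc) h.
by rewrite /Rdiv Rmult_assoc Rinv_l; lra.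
Qed.

Lemma Rmul_le_of_le_div a b c : (0 < c -> a <= b / c -> a * c <= b)%R.
Proof.
move=> hc h; have := Rmult_le_compat_r c _ _ (Rlt_le _ _ hc) h.
by rewrite /Rdiv Rmult_assoc Rinv_l; lra.
Qed.

Section RealFacts.
Open Scope R_scope.

Lemma multiple_near th v : th <> 0 -> 0 <= v < 1 ->
  exists (k : nat) (z : Z), Rabs (INR k * th - v - IZR z) <= Rabs th /\ INR k <= / Rabs th + 1.
Proof.
have approx : forall t u, 0 < t -> 0 <= u <= 1 ->
    exists k : nat, u < INR k * t <= u + t /\ INR k <= / t + 1.
  move=> t u ht hu; have [hu1 hu2] := archimed (u / t).
  have hut : 0 <= u / t by apply: Rmult_le_pos; [lra | left; apply: Rinv_0_lt_compat].
  have hk : INR (Z.to_nat (up (u / t))) = IZR (up (u / t)) by rewrite INR_Z_to_nat //; apply: IZR_gt_m1; lra.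
  have ut : u / t * t = u by field; lra.
  exists (Z.to_nat (up (u / t))); rewrite hk; split; first split.
  - by have := Rmult_lt_compat_r t _ _ ht hu1; rewrite ut.
  - by nra.
  - have hinv : 0 < / t by apply: Rinv_0_lt_compat.
    have : u / t <= / t by rewrite /Rdiv; nra.
    by lra.
move=> hth hv; case: (Rlt_or_le 0 th) => hpos.
  have [k [[h1 h2] h3]] := approx th v hpos ltac:(lra).
  have -> : Rabs th = th by apply: Rabs_right; lra.
  by exists k, 0%Z; split => //; apply: Rabs_le; lra.
have hneg : th < 0 by case: (Rle_lt_or_eq_dec _ _ hpos).
have [k [[h1 h2] h3]] := approx (- th) (1 - v) ltac:(lra) ltac:(lra).
have -> : Rabs th = - th by apply: Rabs_left.
exists k, (-1)%Z; split; last lra.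
by apply: Rabs_le; have := Rmult_comm (INR k) th; lra.
Qed.

End RealFacts.

Lemma eventually_zero (f : nat -> nat) c :
  (forall N, \sum_(i < N) f i <= c) -> exists M, forall i, M <= i -> f i = 0.
Proof.
elim: c f => [|c IH] f hf.
  exists 0 => i _; apply/eqP; rewrite -leqn0.
  by apply: leq_trans (hf i.+1); rewrite big_ord_recr leq_addl.
have [zero|/not_all_ex_not [i0 hi0]] := classic (forall i, f i = 0); first by exists 0.
have [|M hM] := IH (fun n => f (i0.+1 + n)).
  move=> N; have := hf (i0.+1 + N); rewrite big_split_ord /= big_ord_recr /=.
  have : 0 < f i0 by rewrite lt0n; apply/eqP.
  move: (\sum_(i < i0) f i) => S; lia.
exists (i0.+1 + M) => i hi; have := hM (i - i0.+1) ltac:(lia).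
by rewrite subnKC //; lia.
Qed.

(* From balance to a rotation: a balanced word x has a slope al, the limit
   frequency of 1's, with every window of length l having weight within 1 of
   l*al.  The intercept [phi n = n al - (number of 1's in x[0,n))] then stays
   in an interval of length 1, and x n is read off from the position of phi n. *)
Section Balanced.
Variable x : word.
Hypothesis bal : forall n i j, wsum x i n <= wsum x j n + 1.

(* Splitting the prefix of length l*c into c windows of length l. *)
Lemma prefix_blocks l c i :
  c * wsum x i l <= wsum x 0 (l * c) + c /\ wsum x 0 (l * c) <= c * (wsum x i l + 1).
Proof.
elim: c => [|c [IH1 IH2]]; first by rewrite muln0 wsum0.
have -> : l * c.+1 = l * c + l by rewrite mulnS addnC.
rewrite wsum_add add0n.
have b1 := bal l i (l * c); have b2 := bal l (l * c) i.
by rewrite !mulSn; rewrite !mulnDr !muln1 in IH2 *; split; lia.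
Qed.

Open Scope R_scope.

(* The slope: the supremum of (weight - 1)/length over all windows. *)
Lemma slope_exists : exists al, forall (i l : nat), (0 < l)%nat ->
  INR (wsum x i l) - 1 <= INR l * al <= INR (wsum x i l) + 1.
Proof.
pose E r := exists (i l : nat), (0 < l)%nat /\ r = (INR (wsum x i l) - 1) / INR l.
have bE : bound E.
  exists 1 => r [i [l [hl ->]]].
  have hl' : 0 < INR l by exact: ((INR_ltP 0 l).1 hl).
  have hw : INR (wsum x i l) <= INR l by apply/INR_leP; apply: wsum_le.
  by apply: Rdiv_le_of => //; lra.
have nE : exists r, E r by exists ((INR (wsum x 0 1) - 1) / INR 1), 0%nat, 1%nat.
have [al [ub lub]] := @completeness E bE nE.
exists al => i l hl.
have hl' : 0 < INR l by exact: ((INR_ltP 0 l).1 hl).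
split.
  have := ub _ (ex_intro _ i (ex_intro _ l (conj hl erefl))).
  by move/(Rmul_le_of_div_le hl'); lra.
have : al <= (INR (wsum x i l) + 1) / INR l.
  apply: lub => r [i' [l' [hl2 ->]]].
  have hl2' : 0 < INR l' by exact: ((INR_ltP 0 l').1 hl2).
  have [b1 _] := prefix_blocks l' l i'.
  have [_ b2] := prefix_blocks l l' i.
  rewrite mulnC in b2.
  move/INR_leP: b1; move/INR_leP: b2; rewrite !INR_muln !INR_addn /= => b2 b1.
  apply: Rdiv_le_of => //; rewrite /Rdiv Rmult_assoc (Rmult_comm (/ INR l)) -Rmult_assoc.
  by apply: Rle_div_of => //; nra.
by move/(Rmul_le_of_le_div hl'); lra.
Qed.

Section Slope.
Variable al : R.
Hypothesis hal : forall (i l : nat), (0 < l)%nat ->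
  INR (wsum x i l) - 1 <= INR l * al <= INR (wsum x i l) + 1.

Definition phi n := INR n * al - INR (wsum x 0 n).

Lemma phi_add i l : phi (i + l) - phi i = INR l * al - INR (wsum x i l).
Proof. by rewrite /phi wsum_add add0n !INR_addn; ring. Qed.

Lemma phi_step n : phi n.+1 = phi n + al - (if x n then 1 else 0).
Proof.
have h := phi_add n 1; rewrite addn1 /wsum big_ord1 addn0 INR_bool in h.
by case: (x n) h => /= h; lra.
Qed.

Lemma phi0 : phi 0 = 0.
Proof. by rewrite /phi wsum0 /=; ring. Qed.

Lemma phi_bound m n : Rabs (phi m - phi n) <= 1.
Proof.
wlog h : m n / (n <= m)%nat.
  move=> H; case: (leqP n m) => hc; first exact: H.
  by rewrite Rabs_minus_sym; apply: H; exact: ltnW.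
case: (eqVneq m n) => [->|ne]; first by rewrite Rminus_diag Rabs_R0; lra.
have -> : m = (n + (m - n))%nat by lia.
rewrite phi_add; have [h1 h2] := hal n (l := m - n) ltac:(lia).
by apply: Rabs_le; lra.
Qed.

Lemma slope_ge0 : 0 <= al.
Proof.
apply: Rnot_lt_le => hlt.
have [l hl] := INR_unbounded (/ (- al)).
have hinv : 0 < / (- al) by apply: Rinv_0_lt_compat; lra.
have hl0 : (0 < l)%nat by case: l hl => [|l] //= hl; lra.
have [h1 _] := hal 0 hl0.
have hw : 0 <= INR (wsum x 0 l) by apply: pos_INR.
have : / (- al) * (- al) = 1 by field; lra.
by nra.
Qed.

Lemma slope_le1 : al <= 1.
Proof.
apply: Rnot_lt_le => hlt.
have [l hl] := INR_unbounded (/ (al - 1)).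
have hinv : 0 < / (al - 1) by apply: Rinv_0_lt_compat; lra.
have hl0 : (0 < l)%nat by case: l hl => [|l] //= hl; lra.
have [_ h2] := hal 0 hl0.
have hw : INR (wsum x 0 l) <= INR l by apply/INR_leP; apply: wsum_le.
have : / (al - 1) * (al - 1) = 1 by field; lra.
by nra.
Qed.

(* Summing the windows of length q at 0, ..., N-1 (equivalently those of
   length N at 0, ..., q-1) gives N q al up to q. *)
Lemma window_sum_bounds q N :
  INR q * (INR N * al - 1) <= INR (\sum_(i < N) wsum x i q) <= INR q * (INR N * al + 1).
Proof.
have -> : (\sum_(i < N) wsum x i q = \sum_(r < q) wsum x r N)%nat.
  rewrite /wsum exchange_big /=; apply: eq_bigr => r _; apply: eq_bigr => i _.
  by rewrite addnC.
case: (posnP N) => [->|hN0].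
  have -> : (\sum_(r < q) wsum x r 0 = 0)%nat by apply: big1 => r _; rewrite wsum0.
  by rewrite /= Rmult_0_l; have := pos_INR q; nra.
elim: q => [|q [IH1 IH2]]; first by rewrite big_ord0 /=; lra.
rewrite S_INR big_ord_recr /= INR_addn.
have [h1 h2] := hal q hN0.
by move: IH1 IH2; set S := INR (\sum_(r < q) wsum x r N) => IH1 IH2; split; nra.
Qed.

Hypothesis aper : ~ eventually_periodic x.

(* Eventually constant window weights of length q would make q a period. *)
Lemma constant_window_weight_absurd q P M : (0 < q)%nat ->
  (forall i, (M <= i)%nat -> wsum x i q = P) -> False.
Proof.
move=> hq h; apply: aper; exists M, q; split => // i hi.
have e1 := wsumS x i q; rewrite wsumS' (h i hi) (h i.+1 (leqW hi)) in e1.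
by move: e1; case: (x i); case: (x (i + q)%nat) => //=; lia.
Qed.

(* The slope is irrational: if q al = P, the deviations of the window weights
   from P have constant sign (by balance) and bounded partial sums, so they
   eventually vanish. *)
Lemma slope_irrational q P : (0 < q)%nat -> INR q * al <> INR P.
Proof.
move=> hq e.
have bounds : forall N, (N * P <= \sum_(i < N) wsum x i q + q)%nat /\
                         (\sum_(i < N) wsum x i q <= N * P + q)%nat.
  move=> N; have [s1 s2] := window_sum_bounds q N.
  have e' : INR q * INR N * al = INR N * INR P by rewrite -e; ring.
  by split; apply/INR_leP; rewrite !INR_addn INR_muln; nra.
have hW : forall i, (wsum x i q <= P + 1)%nat /\ (P <= wsum x i q + 1)%nat.
  move=> i; have [h1 h2] := hal i hq; rewrite e in h1 h2.
  by split; apply/INR_leP; rewrite INR_addn /=; lra.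
suff [M hM] : exists M, forall i, (M <= i)%nat -> wsum x i q = P.
  exact: constant_window_weight_absurd hq hM.
have [hle|/not_all_ex_not [i0 hi0]] := classic (forall i, (wsum x i q <= P)%nat).
  have [|M hM] := @eventually_zero (fun i => P - wsum x i q)%nat q.
    move=> N; have [b1 _] := bounds N.
    have : (\sum_(i < N) (P - wsum x i q) + \sum_(i < N) wsum x i q = N * P)%nat.
      rewrite -big_split /= -[N in (N * P)%nat]card_ord -sum_nat_const.
      by apply: eq_bigr => i _; rewrite subnK.
    by lia.
  by exists M => i hi; have := hM i hi; have := hle i; lia.
have hge : forall i, (P <= wsum x i q)%nat.
  by move=> i; have := bal q i0 i; have := hW i; lia.
have [|M hM] := @eventually_zero (fun i => wsum x i q - P)%nat q.
  move=> N; have [_ b2] := bounds N.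
  have : (\sum_(i < N) (wsum x i q - P) + N * P = \sum_(i < N) wsum x i q)%nat.
    rewrite -[N in (N * P)%nat]card_ord -sum_nat_const -big_split /=.
    by apply: eq_bigr => i _; rewrite subnK.
  by lia.
by exists M => i hi; have := hM i hi; have := hge i; lia.
Qed.

Lemma slope_pos : 0 < al.
Proof.
by have := slope_ge0; have := slope_irrational (q := 1) (P := 0) isT; rewrite /= Rmult_1_l; lra.
Qed.

Lemma slope_lt1 : al < 1.
Proof.
by have := slope_le1; have := slope_irrational (q := 1) (P := 1) isT; rewrite /= Rmult_1_l; lra.
Qed.

(* By irrationality, phi is injective and no two values are at distance 1. *)
Lemma phi_inj m n : m <> n -> phi m <> phi n.
Proof.
wlog h : m n / (n < m)%nat.
  by move=> H ne; case: (ltngtP n m) => c; [exact: H | move/esym; apply: H; lia | lia].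
move=> _ e; have := phi_add n (m - n); rewrite subnKC ?(ltnW h) // e Rminus_diag => e2.
by apply: (slope_irrational (q := m - n) (P := wsum x n (m - n))); [lia | lra].
Qed.

Lemma phi_close m n : m <> n -> Rabs (phi m - phi n) < 1.
Proof.
wlog h : m n / (n < m)%nat.
  move=> H ne; case: (ltngtP n m) => c; [exact: H | | lia].
  by rewrite Rabs_minus_sym; apply: H; lia.
move=> _; have e0 := phi_add n (m - n); rewrite subnKC ?(ltnW h) // in e0.
have hq : (0 < m - n)%nat by lia.
case: (Rle_lt_or_eq_dec _ _ (phi_bound m n)) => // e1; exfalso.
move: e1; case: (Rcase_abs (phi m - phi n)) => h2;
  [rewrite Rabs_left // => e1 | rewrite Rabs_right // => e1]; last first.
  by apply: (slope_irrational (P := (wsum x n (m - n)).+1) hq); rewrite S_INR; lra.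
case: (posnP (wsum x n (m - n))) => hw.
  by rewrite hw /= in e0; have := pos_INR (m - n); have := slope_pos; nra.
apply: (slope_irrational (P := (wsum x n (m - n)).-1) hq).
by have := S_INR (wsum x n (m - n)).-1; rewrite prednK // => e3; lra.
Qed.

Lemma phi_extrema : exists t s, (forall n, s <= phi n <= t) /\
  (forall e, 0 < e -> exists n, t - e < phi n) /\
  (forall e, 0 < e -> exists n, phi n < s + e) /\ t - 1 <= s.
Proof.
have hb : forall n, -1 <= phi n <= 1.
  by move=> n; apply: Rabs_le_inv; have := phi_bound n 0; rewrite phi0 Rminus_0_r.
pose E1 r := exists n, r = phi n.
pose E2 r := exists n, r = - phi n.
have b1 : bound E1 by exists 1 => r [n ->]; have := hb n; lra.
have b2 : bound E2 by exists 1 => r [n ->]; have := hb n; lra.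
have [t [ub1 lub1]] := @completeness E1 b1 (ex_intro _ _ (ex_intro _ 0%nat erefl)).
have [ms [ub2 lub2]] := @completeness E2 b2 (ex_intro _ _ (ex_intro _ 0%nat erefl)).
exists t, (- ms); split; [|split; [|split]].
- move=> n; split; last exact: ub1 _ (ex_intro _ n erefl).
  by have := ub2 _ (ex_intro _ n erefl); lra.
- move=> e he; apply: NNPP => hne.
  suff : t <= t - e by lra.
  by apply: lub1 => r [n ->]; apply: Rnot_lt_le => hh; apply: hne; exists n; lra.
- move=> e he; apply: NNPP => hne.
  suff : ms <= ms - e by lra.
  by apply: lub2 => r [n ->]; apply: Rnot_lt_le => hh; apply: hne; exists n; lra.
- suff : ms <= 1 - t by lra.
  apply: lub2 => r [n ->].
  suff : t <= phi n + 1 by lra.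
  by apply: lub1 => r' [m ->]; have := Rabs_le_inv (phi_bound m n); lra.
Qed.

(* Dirichlet: some multiple of al is within e of an integer, but not equal to
   it (pigeonhole on the fractional parts of i al, i <= N, with 1/N < e). *)
Lemma small_multiple e : 0 < e ->
  exists g c, (0 < g)%nat /\ 0 < Rabs (INR g * al - IZR c) < e.
Proof.
move=> he; have [N [hN1 hN2]] := archimed_cor1 e he.
have hN : 0 < INR N by apply: lt_0_INR.
pose fr i := INR i * al - IZR (Int_part (INR i * al)).
have hfr : forall i, 0 <= fr i < 1.
  by move=> i; have := Int_part_spec (INR i * al); rewrite /fr; lra.
pose bin i := Z.to_nat (Int_part (INR N * fr i)).
have hfl : forall i, (0 <= Int_part (INR N * fr i) < Z.of_nat N)%Z.
  move=> i; have := Int_part_spec (INR N * fr i); have := hfr i => hf hs.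
  split; first by apply: IZR_gt_m1; nra.
  by apply: lt_IZR; rewrite -INR_IZR_INZ; nra.
have hbin : forall i, (i <= N)%nat -> (bin i < N)%nat by move=> i _; have := hfl i; rewrite /bin; lia.
have [i [i' [hii e1]]] := pigeonhole hbin.
have e2 : Int_part (INR N * fr i) = Int_part (INR N * fr i').
  by move: e1; rewrite /bin; have := hfl i; have := hfl i'; lia.
have d1 : Rabs (fr i' - fr i) < / INR N.
  have := Int_part_spec (INR N * fr i); have := Int_part_spec (INR N * fr i').
  rewrite e2 => h1 h2.
  have : Rabs (INR N * (fr i' - fr i)) < 1 by apply: Rabs_def1; lra.
  rewrite Rabs_mult Rabs_right; last lra.
  move=> h; apply: (Rmult_lt_reg_l (INR N)) => //.
  by rewrite Rinv_r; lra.
exists (i' - i)%nat, (Int_part (INR i' * al) - Int_part (INR i * al))%Z.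
have gi : INR (i' - i) = INR i' - INR i.
  by rewrite -{2}(subnKC (ltnW (proj1 (andP hii)))) INR_addn; ring.
have eq1 : INR (i' - i) * al - IZR (Int_part (INR i' * al) - Int_part (INR i * al)) = fr i' - fr i.
  by rewrite gi minus_IZR /fr; ring.
split; first lia.
rewrite eq1; split; last lra.
apply: Rabs_pos_lt => h0.
have hpos : 0 < INR (i' - i) * al.
  by apply: Rmult_lt_0_compat; [apply: lt_0_INR; apply/ltP; lia | exact: slope_pos].
have hc : (0 <= Int_part (INR i' * al) - Int_part (INR i * al))%Z by apply: IZR_gt_m1; lra.
apply: (slope_irrational (q := i' - i) (P := Z.to_nat (Int_part (INR i' * al) - Int_part (INR i * al)))).
  lia.
by rewrite INR_Z_to_nat //; lra.
Qed.

Lemma phi_jump a g k c : exists zz : Z,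
  phi (a + g * k)%nat = phi a + INR k * (INR g * al - IZR c) + IZR zz.
Proof.
exists (Z.of_nat k * c - Z.of_nat (wsum x a (g * k)))%Z.
have := phi_add a (g * k); rewrite INR_muln minus_IZR mult_IZR -!INR_IZR_INZ => h.
lra.
Qed.


Lemma dense_orbit e : 0 < e -> exists L, forall a y, exists j, (j <= L)%nat /\
  exists z : Z, Rabs (phi (a + j)%nat - y - IZR z) < e.
Proof.
move=> he; have [g [c [hg [ht1 ht2]]]] := small_multiple he.
set th := INR g * al - IZR c in ht1 ht2.
have hth : th <> 0 by move=> h; rewrite h Rabs_R0 in ht1; lra.
have [K0 hK0] := INR_unbounded (/ Rabs th + 1).
exists (g * K0)%nat => a y.
set u := y - phi a.
set v := u - IZR (Int_part u).
have hv : 0 <= v < 1 by have := Int_part_spec u; rewrite /v; lra.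
have [k [z [hz hk]]] := multiple_near hth hv.
exists (g * k)%nat; split; first by apply: leq_mul => //; apply/INR_leP; lra.
have [zz hzz] := phi_jump a g k c.
exists (zz - Int_part u + z)%Z; rewrite hzz -/th.
have -> : phi a + INR k * th + IZR zz - y - IZR (zz - Int_part u + z) = INR k * th - v - IZR z.
  by rewrite /v /u plus_IZR minus_IZR; ring.
lra.
Qed.

Section Range.
Variables t s : R.
Hypothesis hst : forall n, s <= phi n <= t.
Hypothesis ht : forall e, 0 < e -> exists n, t - e < phi n.
Hypothesis hs : forall e, 0 < e -> exists n, phi n < s + e.
Hypothesis hts : t - 1 <= s.

Lemma letter_below n : phi n < t - al -> x n = false.
Proof.
move=> h; case hx: (x n) => //.
by have := phi_step n; rewrite hx => e; have := hst n.+1; lra.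
Qed.

Lemma letter_above n : phi n > t - al -> x n = true.
Proof.
move=> h; case hx: (x n) => //.
by have := phi_step n; rewrite hx => e; have := hst n.+1; lra.
Qed.

Lemma range_length : t = s + 1.
Proof.
apply: Rle_antisym; first lra.
apply: Rnot_lt_le => hlt.
set e := s + 1 - t.
have he : 0 < e by rewrite /e; lra.
have [L hL] := dense_orbit (e := e / 2) ltac:(lra).
have [j [_ [z hz]]] := hL 0%nat (s - e / 2).
have := Rabs_def2 _ _ hz; have := hst (0 + j)%nat => hp hz'.
have : (z <= 0 \/ 1 <= z)%Z by lia.
by case=> hz1; have := IZR_le _ _ hz1; rewrite /e in hz' *; lra.
Qed.

(* Both ends of the range are approached within d in a bounded number of
   steps from anywhere (density, with the integer offset forced to be 0). *)
Lemma extremes_visited d : 0 < d -> exists L, forall a,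
  (exists j, (j <= L)%nat /\ t - d < phi (a + j)%nat) /\
  (exists j, (j <= L)%nat /\ phi (a + j)%nat < s + d).
Proof.
move=> hd; set d' := Rmin d (1/2).
have hd' : 0 < d' by apply: Rmin_pos; lra.
have hd1 : d' <= d by apply: Rmin_l.
have hd2 : d' <= 1/2 by apply: Rmin_r.
have [L hL] := dense_orbit (e := d' / 2) ltac:(lra).
exists L => a; split.
  have [j [hj [z hz]]] := hL a (t - d' / 2).
  exists j; split => //.
  have := Rabs_def2 _ _ hz; have := hst (a + j)%nat => hp hz'.
  have : (z <= -1 \/ z = 0 \/ 1 <= z)%Z by lia.
  case=> [hz1|[hz1|hz1]]; try (have := IZR_le _ _ hz1; lra).
  by rewrite hz1 in hz'; lra.
have [j [hj [z hz]]] := hL a (s + d' / 2).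
exists j; split => //.
have := Rabs_def2 _ _ hz; have := hst (a + j)%nat => hp hz'.
have : (z <= -1 \/ z = 0 \/ 1 <= z)%Z by lia.
case=> [hz1|[hz1|hz1]]; try (have := IZR_le _ _ hz1; lra).
by rewrite hz1 in hz'; lra.
Qed.

Lemma phi_shift_agree a b L : factor x a L = factor x b L ->
  forall j, (j <= L)%nat -> phi (b + j)%nat - phi (a + j)%nat = phi b - phi a.
Proof.
move/factorP => h; elim=> [|j IH] hj; first by rewrite !addn0.
rewrite !addnS !phi_step h //.
by have := IH (ltnW hj); lra.
Qed.

Lemma cylinder_stable a K : (forall k, (k < K)%nat -> phi (a + k)%nat <> t - al) ->
  exists eta, 0 < eta /\ forall b, Rabs (phi a - phi b) < eta -> factor x a K = factor x b K.
Proof.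
elim: K => [|K IH] hK.
  by exists 1; split; [lra | move=> b _; rewrite /factor].
have [eta0 [he0 H0]] := IH (fun k hk => hK k (ltnW hk)).
have hne := hK K (ltnSn K).
set m0 := Rabs (phi (a + K)%nat - (t - al)).
have hm0 : 0 < m0 by apply: Rabs_pos_lt; lra.
exists (Rmin eta0 m0); split; first by apply: Rmin_pos.
move=> b hb.
have hb0 : Rabs (phi a - phi b) < eta0 by apply: (Rlt_le_trans _ _ _ hb); apply: Rmin_l.
have hb1 : Rabs (phi a - phi b) < m0 by apply: (Rlt_le_trans _ _ _ hb); apply: Rmin_r.
have e1 := H0 b hb0.
have e2 := phi_shift_agree e1 (leqnn K).
rewrite !factor_rcons e1; congr rcons.
have := Rabs_def2 _ _ hb1; rewrite /m0 => hb2.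
case: (Rlt_or_le (phi (a + K)%nat) (t - al)) => hc.
  rewrite Rabs_left in hb2; last lra.
  by rewrite !letter_below //; lra.
rewrite Rabs_right in hb2; last lra.
by rewrite !letter_above //; lra.
Qed.

Lemma leftSpecial_of m n k : x m <> x n -> factor x m.+1 k = factor x n.+1 k ->
  leftSpecial x (factor x m.+1 k).
Proof.
move=> ne e.
have f1 : isFactor x (x m :: factor x m.+1 k) by exists m; rewrite /= size_factor factor_cons.
have f2 : isFactor x (x n :: factor x m.+1 k) by exists n; rewrite /= size_factor factor_cons e.
by move: f1 f2 ne; case: (x m); case: (x n) => // f1 f2 _; split.
Qed.

(* If the orbit after m never meets the cut point and phi (m+1) is a limit of
   values phi (n+1) with x n <> x m, then the tail of x after m is the
   characteristic word: x is singular. *)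
Lemma singular_absurd m : nonsingular x -> (forall k', phi (m.+1 + k')%nat <> t - al) ->
  (forall eta, 0 < eta -> exists n, x m <> x n /\ Rabs (phi m.+1 - phi n.+1) < eta) -> False.
Proof.
move=> ns hmarg hclose.
pose c := fun i => x (m.+1 + i)%nat.
have fc : forall k, factor c 0 k = factor x m.+1 k by move=> k0; apply/factorP => i _.
have hc : characteristic x c.
  split; first by move=> k0; exists m.+1; rewrite fc size_factor.
  move=> k0; rewrite fc.
  have [eta [he H]] := cylinder_stable (a := m.+1) (K := k0) (fun k' _ => hmarg k').
  have [n [ne hn]] := hclose _ he.
  exact: (leftSpecial_of ne (H _ hn)).
have [m' hm'] := ns c hc m.+1 isT.
by apply: hm'; rewrite /c addSn.
Qed.

Hypothesis ns : nonsingular x.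

(* For a nonsingular word, phi never reaches its infimum: otherwise the tail
   after the minimum would be the characteristic word. *)
Lemma phi_above_inf m : s < phi m.
Proof.
have tse := range_length; have ha := slope_pos; have ha1 := slope_lt1.
case: (Rle_lt_or_eq_dec _ _ (proj1 (hst m))) => // e; exfalso.
have xm : x m = false by apply: letter_below; lra.
have pm1 : phi m.+1 = s + al by rewrite phi_step xm; lra.
apply: (singular_absurd ns (m := m)).
  move=> k' e1; have := phi_step (m.+1 + k'); rewrite e1.
  case: (x _) => e2.
    by apply: (phi_inj (m := (m.+1 + k').+1) (n := m)); [lia | rewrite e2; lra].
  have := phi_close (m := (m.+1 + k').+1) (n := m) ltac:(lia).
  rewrite e2 -e tse; have -> : s + 1 - al + al - 0 - s = 1 by ring.
  by rewrite Rabs_R1; lra.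
move=> eta he.
have [n hn] := ht (e := Rmin eta al) (Rmin_pos _ _ he ha).
have h1 := Rmin_l eta al; have h2 := Rmin_r eta al.
have xn : x n = true by apply: letter_above; lra.
exists n; split; first by rewrite xm xn.
by rewrite pm1 phi_step xn; apply: Rabs_def1; have := hst n; lra.
Qed.

Lemma phi_below_sup m : phi m < t.
Proof.
have tse := range_length; have ha := slope_pos; have ha1 := slope_lt1.
case: (Rle_lt_or_eq_dec _ _ (proj2 (hst m))) => // e; exfalso.
have xm : x m = true by apply: letter_above; rewrite e; lra.
have pm1 : phi m.+1 = s + al by rewrite phi_step xm e; lra.
apply: (singular_absurd ns (m := m)).
  move=> k' e1; have := phi_step (m.+1 + k'); rewrite e1.
  case: (x _) => e2.
    have := phi_close (m := (m.+1 + k').+1) (n := m) ltac:(lia).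
    rewrite e2 e; have -> : t - al + al - 1 - t = -1 by ring.
    by rewrite Rabs_Ropp Rabs_R1; lra.
  by apply: (phi_inj (m := (m.+1 + k').+1) (n := m)); [lia | rewrite e2 e; lra].
move=> eta he.
have ha2 : 0 < 1 - al by lra.
have [n hn] := hs (e := Rmin eta (1 - al)) (Rmin_pos _ _ he ha2).
have h1 := Rmin_l eta (1 - al); have h2 := Rmin_r eta (1 - al).
have xn : x n = false by apply: letter_below; lra.
exists n; split; first by rewrite xm xn.
by rewrite pm1 phi_step xn; apply: Rabs_def1; have := hst n; lra.
Qed.

Lemma phi_margin k : exists d, 0 < d /\ forall i, (i <= k)%nat -> s + d <= phi i <= t - d.
Proof.
pose gap i := Rmin (phi i - s) (t - phi i).
have hgap : forall i, 0 < gap i /\ s + gap i <= phi i <= t - gap i.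
  move=> i; have := phi_above_inf i; have := phi_below_sup i => h1 h2.
  have := Rmin_l (phi i - s) (t - phi i); have := Rmin_r (phi i - s) (t - phi i).
  by split; [apply: Rmin_pos | rewrite /gap]; lra.
elim: k => [|k [d [hd H]]].
  exists (gap 0%nat); split; first by case: (hgap 0%nat).
  by move=> i; rewrite leqn0 => /eqP ->; case: (hgap 0%nat).
have [g1 g2] := hgap k.+1.
exists (Rmin d (gap k.+1)); split; first by apply: Rmin_pos.
have m1 := Rmin_l d (gap k.+1); have m2 := Rmin_r d (gap k.+1).
move=> i; rewrite leq_eqVlt => /orP [/eqP ->|hi]; first lra.
by have := H i hi; lra.
Qed.

(* The return property: if two positions a < b share a long enough window,
   then phi (b - a + i) - phi i = phi b - phi a for i <= k (the two sides
   differ by an integer, which must vanish since the ends of the range are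
   visited within the window), so x reads the same at b - a + i and at i. *)
Lemma return_property k : exists L, forall L', (L <= L')%nat ->
  forall a b, (a < b)%nat -> factor x a L' = factor x b L' -> factor x (b - a) k = factor x 0 k.
Proof.
have [d [hd Hd]] := phi_margin k.
have [L HL] := extremes_visited hd.
exists L => L' hL a b hab e.
set dd := (b - a)%nat.
set D := phi b - phi a.
have agr := phi_shift_agree e.
have hD : D = INR dd * al - INR (wsum x a dd) by rewrite /D -(phi_add a dd) /dd subnKC // ltnW.
have hE : forall i, (i <= k)%nat -> phi (dd + i)%nat - phi i = D.
  move=> i hi.
  have eE : phi (dd + i)%nat - phi i = INR dd * al - INR (wsum x i dd) by rewrite addnC phi_add.
  have [Hd1 Hd2] := Hd i hi.
  have hst1 := hst (dd + i)%nat.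
  case: (ltngtP (wsum x a dd) (wsum x i dd)) => c.
  - have c' : INR (wsum x a dd) + 1 <= INR (wsum x i dd) by rewrite -S_INR; apply/INR_leP.
    have [[j [hj hj']] _] := HL a.
    have := agr j (leq_trans hj hL); rewrite -/D => eD.
    by have := hst (b + j)%nat; lra.
  - have c' : INR (wsum x i dd) + 1 <= INR (wsum x a dd) by rewrite -S_INR; apply/INR_leP.
    have [_ [j [hj hj']]] := HL a.
    have := agr j (leq_trans hj hL); rewrite -/D => eD.
    by have := hst (b + j)%nat; lra.
  - by rewrite eE hD c.
apply/factorP => i hi.
have e1 := hE i (ltnW hi); have e2 := hE i.+1 hi.
rewrite addnS !phi_step in e2.
by move: e2; rewrite add0n; case: (x (dd + i)%nat); case: (x i) => //= e2; lra.
Qed.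

End Range.
End Slope.
End Balanced.

Theorem sturmian_return_property w : sturmian w -> nonsingular w ->
  forall k, exists L, forall L', L <= L' ->
  forall a b, a < b -> factor w a L' = factor w b L' -> factor w (b - a) k = factor w 0 k.
Proof.
move=> sw ns k.
have bal := sturmian_balanced sw.
have aper := sturmian_aperiodic sw.
have [al hal] := slope_exists bal.
have [t [s [hst [ht [hs hts]]]]] := phi_extrema hal.
exact: (return_property bal hal aper hst ht hs hts ns k).
Qed.

(* Given generators x_0 < x_1 < ..., consider the partial sums
   S j = x_1 + ... + x_j.  Two of them carry the same pair of length-L windows
   in w and w'; their difference is a finite sum of generators, and by the
   return property both prefixes occur there. *)

Lemma pair_window_repeat w w' L (S : nat -> nat) : sturmian w -> sturmian w' ->
  exists j l, j < l /\ factor w (S j) L = factor w (S l) L /\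
                      factor w' (S j) L = factor w' (S l) L.
Proof.
move=> sw sw'.
have [s1 [_ [sz1 [hs1 _]]]] := sturmian_factors L sw.
have [s2 [_ [sz2 [hs2 _]]]] := sturmian_factors L sw'.
pose i1 j := index (factor w (S j) L) s1.
pose i2 j := index (factor w' (S j) L) s2.
have hi1 : forall j, i1 j < L.+1 by move=> j; rewrite -sz1 index_mem.
have hi2 : forall j, i2 j < L.+1 by move=> j; rewrite -sz2 index_mem.
have hcol : forall j, j <= L.+1 * L.+1 -> i1 j * L.+1 + i2 j < L.+1 * L.+1.
  by move=> j _; have := hi1 j; have := hi2 j; nia.
have [j [l [hjl e]]] := pigeonhole hcol.
have e2 : i2 j = i2 l by move: (congr1 (modn^~ L.+1) e); rewrite !modnMDl !modn_small.
have e1 : i1 j = i1 l.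
  by move: (congr1 (divn^~ L.+1) e); rewrite !divnMDl // !divn_small // !addn0.
exists j, l; split; first by case/andP: hjl.
split.
  by rewrite -(nth_index [::] (hs1 (S j))) -(nth_index [::] (hs1 (S l))) -/(i1 j) e1.
by rewrite -(nth_index [::] (hs2 (S j))) -(nth_index [::] (hs2 (S l))) -/(i2 j) e2.
Qed.

Lemma partial_sums_diff (xs : nat -> nat) j l : (forall i, 0 < xs i.+1) -> j < l ->
  \sum_(i < j) xs i.+1 < \sum_(i < l) xs i.+1 /\
  \sum_(i < l) xs i.+1 - \sum_(i < j) xs i.+1 = \sum_(i <- iota j.+1 (l - j)) xs i.
Proof.
move=> xpos hjl.
have Ssum : forall d, \sum_(i < j + d) xs i.+1 = \sum_(i < j) xs i.+1 + \sum_(i <- iota j.+1 d) xs i.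
  elim=> [|d IH]; first by rewrite addn0 big_nil addn0.
  have -> : iota j.+1 d.+1 = iota j.+1 d ++ [:: j.+1 + d] by rewrite -[d.+1]addn1 iotaD.
  by rewrite addnS big_ord_recr IH big_cat big_seq1 addnA addSn.
have -> : \sum_(i < l) xs i.+1 = \sum_(i < j) xs i.+1 + \sum_(i <- iota j.+1 (l - j)) xs i.
  by rewrite -Ssum subnKC // ltnW.
rewrite addKn; split => //; rewrite -[X in X < _]addn0 ltn_add2l.
case: (l - j) (ltac:(lia) : 0 < l - j) => // d _.
by rewrite /= big_cons; have := xpos j; lia.
Qed.

Theorem IPstar_intersection w w' k k' : sturmian w -> sturmian w' ->
  nonsingular w -> nonsingular w' ->
  IPstar (fun n => occ w (factor w 0 k) n /\ occ w' (factor w' 0 k') n).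
Proof.
move=> sw sw' ns ns' B [xs [inc HB]].
have [L1 H1] := sturmian_return_property sw ns k.
have [L2 H2] := sturmian_return_property sw' ns' k'.
pose S j := \sum_(i < j) xs i.+1.
have [j [l [hjl [f1 f2]]]] := pair_window_repeat (L1 + L2) S sw sw'.
have xpos : forall i, 0 < xs i.+1 by move=> i; have := inc i; lia.
have [hab hdiff] := partial_sums_diff xpos hjl.
exists (S l - S j); split.
  split; rewrite /occ size_factor.
  - by apply: (H1 (L1 + L2)) => //; rewrite leq_addr.
  - by apply: (H2 (L1 + L2)) => //; rewrite leq_addl.
rewrite hdiff /=.
apply: HB; last exact: iota_uniq.
by rewrite -size_eq0 size_iota; lia.
Qed.

(* Galvin–Glazer: every member A of a nonprincipal idempotent ultrafilter p
   is an IP-set.  With A* = {n in A | A - n in p}, which is again in p, one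
   picks x_0 < x_1 < ... and a decreasing chain A_0 = A, A_{i+1} =
   {n : n, n + x_i in A_i*, n > x_i}, with x_i in A_i*; then every finite sum
   of the x_i with smallest index i lies in A_i. *)
Section GalvinGlazer.
Variable p : ufilter.
Hypothesis hu : ultrafilter p.
Hypothesis hnp : nonprincipal p.
Hypothesis hid : forall A, uadd p p A <-> p A.

Lemma p_mono A B : (forall n, A n -> B n) -> p A -> p B.
Proof. by case: hu => _ [_ [h _]]; apply: h. Qed.

Lemma p_and A B : p A -> p B -> p (fun n => A n /\ B n).
Proof. by case: hu => _ [_ [_ [h _]]]; apply: h. Qed.

Lemma p_or_not A : p A \/ p (fun n => ~ A n).
Proof. by case: hu => _ [_ [_ [_ h]]]; apply: h. Qed.

Lemma p_not_empty : ~ p (fun _ => False).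
Proof. by case: hu => _ [h _]. Qed.

Lemma p_final_segment M : p (fun n => M < n).
Proof.
have bounded : ~ p (fun n => n <= M).
  elim: M => [|M IH] h.
    by apply: (@hnp 0); apply: (p_mono _ h) => n; rewrite leqn0 => /eqP.
  case: (p_or_not (fun n => n <= M)) => h2; first exact: IH.
  apply: (@hnp M.+1); apply: (p_mono _ (p_and h h2)) => n [h3 h4].
  by apply/eqP; rewrite eqn_leq h3 /=; lia.
case: (p_or_not (fun n => n <= M)) => h; first by exfalso; apply: bounded.
by apply: (p_mono _ h) => n; rewrite ltnNge => /negP.
Qed.

Definition star (A : nat -> Prop) n := A n /\ p (fun m => A (m + n)).

Lemma star_p A : p A -> p (star A).
Proof. by move=> h; apply: (p_and h); apply/hid. Qed.

Lemma star_shift A n : star A n -> p (fun m => star A (m + n)).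
Proof.
move=> [_ h]; apply: p_mono (star_p h) => m [h1 h2]; split => //.
by apply: (p_mono _ h2) => m'; rewrite addnA.
Qed.

Definition pick_star (A : nat -> Prop) (M : nat) : nat :=
  match excluded_middle_informative (exists y, star A y /\ M < y) with
  | left h => proj1_sig (constructive_indefinite_description _ h)
  | right _ => 0
  end.

Lemma pick_star_spec A M : p A -> star A (pick_star A M) /\ M < pick_star A M.
Proof.
move=> h; rewrite /pick_star; case: excluded_middle_informative => [h'|h'].
  exact: proj2_sig (constructive_indefinite_description _ h').
exfalso; apply: p_not_empty.
apply: (p_mono _ (p_and (star_p h) (p_final_segment M))) => n hn.
by apply: h'; exists n.
Qed.

Fixpoint gg_seq (A : nat -> Prop) (i : nat) : (nat -> Prop) * nat :=
  match i with
  | 0 => (A, pick_star A 0)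
  | i'.+1 => let: (Ai, xi) := gg_seq A i' in
      let A' := fun n => star Ai n /\ star Ai (n + xi) /\ xi < n in (A', pick_star A' xi)
  end.

Section Sequence.
Variable A : nat -> Prop.
Hypothesis hA : p A.
Let Ai i := (gg_seq A i).1.
Let xs i := (gg_seq A i).2.

Lemma gg_seq_S i : Ai i.+1 = (fun n => star (Ai i) n /\ star (Ai i) (n + xs i) /\ xs i < n)
  /\ xs i.+1 = pick_star (Ai i.+1) (xs i).
Proof. by rewrite /Ai /xs /=; case: (gg_seq A i). Qed.

Lemma gg_seq_inv i : p (Ai i) /\ star (Ai i) (xs i).
Proof.
elim: i => [|i [IH1 IH2]].
  by split => //; rewrite /Ai /xs /=; have [h _] := pick_star_spec 0 hA.
have [e1 e2] := gg_seq_S i.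
have hp : p (Ai i.+1).
  rewrite e1; apply: p_and; first exact: star_p.
  by apply: p_and; [exact: star_shift IH2 | exact: p_final_segment].
by split => //; rewrite e2; have [h _] := pick_star_spec (xs i) hp.
Qed.

Lemma gg_seq_increasing i : xs i < xs i.+1.
Proof.
have [_ e2] := gg_seq_S i; rewrite e2.
by have [_ h] := pick_star_spec (xs i) (proj1 (gg_seq_inv i.+1)).
Qed.

Lemma gg_seq_decreasing i j n : i <= j -> Ai j n -> Ai i n.
Proof.
move=> hij; rewrite -(subnKC hij); elim: (j - i) => [|d IH]; first by rewrite addn0.
rewrite addnS => h; apply: IH; have [e1 _] := gg_seq_S (i + d); rewrite e1 in h.
by case: h => [[]].
Qed.

(* A finite sum of the x_k, k in F with all k >= i, lies in A_i: peel off
   the smallest index i0 and use x_i0 + A_{i0+1} inside A_i0. *)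
Lemma gg_finite_sums F : F != [::] -> uniq F -> forall i, (forall k, k \in F -> i <= k) ->
  Ai i (\sum_(k <- F) xs k).
Proof.
move: {2}(size F) (leqnn (size F)) => N.
elim: N F => [|N IH] F hsz hF uF i hi; first by case: F hF hsz uF hi.
have ex : exists n, n \in F.
  by case: F hF hsz uF hi => // a l _ _ _ _; exists a; rewrite inE eqxx.
case: (ex_minnP ex) => i0 hi0 hmin.
rewrite (perm_big _ (perm_to_rem hi0)) big_cons /=.
set F' := rem i0 F.
have uF' : uniq F' by rewrite rem_uniq.
have hF' : forall k, k \in F' -> i0 < k.
  move=> k; rewrite mem_rem_uniq // inE => /andP [ne hk].
  by rewrite ltn_neqAle eq_sym ne hmin.
have hii0 : i <= i0 by apply: hi.
case: (eqVneq F' [::]) => [->|nF'].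
  by rewrite big_nil addn0; apply: (gg_seq_decreasing hii0); exact: (proj1 (proj2 (gg_seq_inv i0))).
have hs : size F' <= N by rewrite size_rem //; move: hsz; case: (size F).
have := IH F' hs nF' uF' i0.+1 hF'.
have [e1 _] := gg_seq_S i0; rewrite e1 => [[_ [[h _] _]]].
by apply: (gg_seq_decreasing hii0); rewrite addnC.
Qed.

End Sequence.

Lemma idempotent_member_IPset A : p A -> IPset A.
Proof.
move=> hA; exists (fun i => (gg_seq A i).2); split; first exact: gg_seq_increasing.
by move=> F hF uF; exact: (gg_finite_sums hA hF uF (i := 0)).
Qed.

End GalvinGlazer.

(* IP* sets are central*: a minimal idempotent missing A would contain the
   complement of A, which is then an IP-set disjoint from A. *)
Lemma IPstar_central_star A : IPstar A -> central_star A.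
Proof.
move=> hA p [hu [hnp [hid _]]].
case: (p_or_not hu A) => // h.
by have [n [h1 h2]] := hA _ (idempotent_member_IPset hu hnp hid h).
Qed.

(* IP* sets are infinite: they meet the IP-set of all n >= N. *)
Lemma IPstar_infinite A : IPstar A -> infinite_set A.
Proof.
move=> hA N.
have : IPset (fun n => N <= n).
  exists (fun i => N + i); split; first by move=> i; lia.
  by case=> // a l _ _; rewrite big_cons; lia.
by move=> /hA [n [h1 h2]]; exists n.
Qed.

Theorem mainTheorem14 (w w' : word) :
  sturmian w -> sturmian w' -> nonsingular w -> nonsingular w' ->
  forall k k' : nat, 0 < k -> 0 < k' ->
    let A := fun n => occ w (factor w 0 k) n /\ occ w' (factor w' 0 k') n in
    IPstar A /\ central_star A /\ infinite_set A.
Proof.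
move=> sw sw' ns ns' k k' _ _ A.
have hA : IPstar A by exact: IPstar_intersection.
by split => //; split; [exact: IPstar_central_star | exact: IPstar_infinite].
Qed.
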